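(* Let $D\ge2$. There exists a constant $C>0$ depending only on $D$ such that: if $0<\eta<1$ and $E\subset\mathbb R^D$ is finite with $\mathrm{diam}(E)=1$ and $V_D(E)\leq\eta^D$, then there exists an improper Euclidean motion $\rho$ with $|\rho(z)-z|\leq C\eta$ for all $z\in E$.
   Context: A Euclidean motion is $x\mapsto Tx+x_0$ with $T\in O(D)$; improper if $\det T=-1$. For finite $E$, $V_D(E)$ is the maximum over $z_0,\dots,z_D\in E$ of the $D$-dimensional volume of the simplex with vertices $z_0,\dots,z_D$. *)

From HB Require Import structures.
From mathcomp Require Import all_boot all_order all_algebra.
From mathcomp Require Import Rstruct.
Set Implicit Arguments. Unset Strict Implicit. Unset Printing Implicit Defensive.
Import Order.TTheory GRing.Theory Num.Theory.
Local Open Scope ring_scope.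

Definition eucl_norm (D : nat) (v : 'rV[Rdefinitions.R]_D) : Rdefinitions.R :=
  Num.sqrt (\sum_(i < D) (v 0 i) ^+ 2).

Definition diam (D : nat) (E : seq 'rV[Rdefinitions.R]_D) : Rdefinitions.R :=
  \big[Num.max/0]_(x <- E) \big[Num.max/0]_(y <- E) eucl_norm (x - y).

Definition simplex_vol (D : nat) (z : 'I_D.+1 -> 'rV[Rdefinitions.R]_D) : Rdefinitions.R :=
  `|\det (\matrix_(i < D, j < D) (z (lift ord0 i) 0 j - z ord0 0 j))|
    / (factorial D)%:R.

Definition VD (D : nat) (E : seq 'rV[Rdefinitions.R]_D) : Rdefinitions.R :=
  \big[Num.max/0]_(f : {ffun 'I_D.+1 -> 'I_(size E)})
     simplex_vol (fun i => nth 0 E (f i)).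

Definition improper_motion (D : nat) (rho : 'rV[Rdefinitions.R]_D -> 'rV[Rdefinitions.R]_D) : Prop :=
  exists (T : 'M[Rdefinitions.R]_D) (x0 : 'rV[Rdefinitions.R]_D),
    T *m T^T = 1%:M /\ \det T = -1 /\ forall x, rho x = x *m T + x0.

(* Put s := 2 D! eta and fix x0 in E.  Among the D x D matrices
   each of whose rows is either a difference z - x0 with z in E or a standard
   basis vector, maximise |det A| * s^(number of basis rows).  The identity
   has weight s^D, whereas a matrix of differences only has
   |det A| <= D! V_D(E) < s^D; so a maximiser A keeps some basis row e_i.
   Let n be the i-th row of cofactors of A, so that n_i = det A.  Replacing
   e_i by z - x0 turns det A into (z - x0).n and costs one factor s, hence
   maximality gives |(z - x0).n| <= s |n_i| <= s |n| on E: the set E lies in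
   a slab of half-width s around the hyperplane through x0 orthogonal to n,
   and the reflection in that hyperplane moves it by at most 2 s.  Of the
   hypothesis diam E = 1 only E <> [::] is used. *)

From HB Require Import structures.
From mathcomp Require Import all_boot all_order all_algebra.
From mathcomp Require Import Rstruct ring.
Import Order.TTheory GRing.Theory Num.Theory.
Local Open Scope ring_scope.

Local Notation R := Rdefinitions.R.

Section RowVectors.

Context {K : comPzRingType} {D : nat}.

Definition dotmx (u v : 'rV[K]_D) : K := (u *m v^T) 0 0.

Lemma dotmxE (u v : 'rV[K]_D) : dotmx u v = \sum_i u 0 i * v 0 i.
Proof. by rewrite /dotmx mxE; apply: eq_bigr => i _; rewrite mxE. Qed.

Lemma mul_row_tr (u v : 'rV[K]_D) : u *m v^T = (dotmx u v)%:M.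
Proof. by apply/matrixP=> i j; rewrite !ord1 [RHS]mxE eqxx mulr1n. Qed.

Lemma dotmxBl (u v w : 'rV[K]_D) : dotmx (u - v) w = dotmx u w - dotmx v w.
Proof. by rewrite /dotmx mulmxBl !mxE. Qed.

Lemma det_1_add_rank1 (u : 'cV[K]_D) (v : 'rV[K]_D) :
  \det (1%:M + u *m v) = 1 + (v *m u) 0 0.
Proof.
set P := block_mx (1%:M : 'M_D) (- u) v (1%:M : 'M_1).
have lower : block_mx 1%:M 0 (- v) 1%:M *m P
             = block_mx 1%:M (- u) 0 (1%:M + v *m u).
  rewrite /P mulmx_block !mul1mx !mul0mx !addr0 !mulNmx !mulmx1 mulmxN opprK.
  by rewrite addNr addrC.
have upper : block_mx 1%:M u 0 1%:M *m P = block_mx (1%:M + u *m v) 0 v 1%:M.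
  by rewrite /P mulmx_block !mul1mx !mul0mx !add0r mulmx1 addNr.
have := congr1 determinant lower; have := congr1 determinant upper.
rewrite !det_mulmx !det_lblock !det_ublock !det1 !mul1r ?mulr1 => <- ->.
by rewrite {1}[v *m u]mx11_scalar -raddfD /= det_scalar1.
Qed.

Lemma det_set_row (A : 'M[K]_D) (i : 'I_D) (v : 'rV[K]_D) :
  \det (\matrix_k (if k == i then v else row k A))
  = dotmx v (\row_j cofactor A i j).
Proof.
rewrite (expand_det_row _ i) dotmxE; apply: eq_bigr => j _.
rewrite !mxE eqxx; congr (_ * (_ * \det _)).
by apply/matrixP => k l; rewrite !mxE eq_sym (negbTE (neq_lift _ _)) mxE.
Qed.

End RowVectors.

Lemma dotmx_self_gt0 {K : realDomainType} {D : nat} {v : 'rV[K]_D} {i : 'I_D} :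
  v 0 i != 0 -> 0 < dotmx v v.
Proof.
move=> vi0; rewrite dotmxE (bigD1 i) //= -expr2.
have vi2_gt0 : 0 < v 0 i ^+ 2 by rewrite exprn_even_gt0 ?vi0 ?orbT.
apply: lt_le_trans vi2_gt0 _; rewrite lerDl sumr_ge0 // => j _.
by rewrite -expr2 sqr_ge0.
Qed.

Section Reflections.

Context {K : fieldType} {D : nat}.

Definition reflection_mx (n : 'rV[K]_D) : 'M[K]_D :=
  1%:M - (2 / dotmx n n) *: (n^T *m n).

Lemma mul_reflection_mx (x n : 'rV[K]_D) :
  x *m reflection_mx n = x - (2 / dotmx n n * dotmx x n) *: n.
Proof.
by rewrite mulmxBr mulmx1 -scalemxAr mulmxA mul_row_tr mul_scalar_mx scalerA mulrC.
Qed.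

Lemma reflection_mx_orthogonal (n : 'rV[K]_D) : dotmx n n != 0 ->
  reflection_mx n *m (reflection_mx n)^T = 1%:M.
Proof.
move=> nn0; rewrite /reflection_mx; set a := 2 / dotmx n n; set P := n^T *m n.
have sym : (1%:M - a *: P)^T = 1%:M - a *: P.
  by rewrite linearB /= tr_scalar_mx linearZ /= trmx_mul trmxK.
have PP : P *m P = dotmx n n *: P.
  by rewrite /P !mulmxA -(mulmxA n^T n) mul_row_tr mul_mx_scalar -scalemxAl.
have a2 : a * a * dotmx n n = a + a by rewrite -mulrA divfK // mulrDr mulr1.
rewrite sym mulmxBl mul1mx mulmxBr mulmx1.
by rewrite -scalemxAl -scalemxAr PP !scalerA a2 scalerDl opprB addrK subrK.
Qed.

Lemma det_reflection_mx (n : 'rV[K]_D) : dotmx n n != 0 ->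
  \det (reflection_mx n) = -1.
Proof.
move=> nn0; rewrite /reflection_mx -scaleNr scalemxAl det_1_add_rank1.
by rewrite -scalemxAr mxE -/(dotmx n n) mulNr divfK //; ring.
Qed.

End Reflections.

Lemma eucl_norm_dotmx {D : nat} (v : 'rV[R]_D) :
  eucl_norm v = Num.sqrt (dotmx v v).
Proof. by rewrite /eucl_norm dotmxE; under eq_bigr do rewrite expr2. Qed.

Lemma eucl_normZ {D : nat} (k : R) (v : 'rV[R]_D) :
  eucl_norm (k *: v) = `|k| * eucl_norm v.
Proof.
rewrite /eucl_norm -sqrtr_sqr -sqrtrM ?sqr_ge0 // mulr_sumr.
by congr Num.sqrt; apply: eq_bigr => i _; rewrite mxE exprMn.
Qed.

Lemma abs_coord_le_eucl_norm {D : nat} (v : 'rV[R]_D) (i : 'I_D) :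
  `|v 0 i| <= eucl_norm v.
Proof.
rewrite /eucl_norm -sqrtr_sqr ler_sqrt ?sumr_ge0 // => [|j _]; last exact: sqr_ge0.
by rewrite (bigD1 i) //= lerDl sumr_ge0 // => j _; rewrite sqr_ge0.
Qed.

Definition reflection_motion {D : nat} (x0 n x : 'rV[R]_D) : 'rV[R]_D :=
  x *m reflection_mx n + (2 / dotmx n n * dotmx x0 n) *: n.

Lemma reflection_motion_improper {D : nat} (x0 n : 'rV[R]_D) :
  dotmx n n != 0 -> improper_motion (reflection_motion x0 n).
Proof.
move=> nn0; exists (reflection_mx n), ((2 / dotmx n n * dotmx x0 n) *: n).
by rewrite reflection_mx_orthogonal // det_reflection_mx.
Qed.

Lemma reflection_motion_sub {D : nat} (x0 n z : 'rV[R]_D) :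
  reflection_motion x0 n z - z = (2 / dotmx n n * dotmx (x0 - z) n) *: n.
Proof.
rewrite /reflection_motion mul_reflection_mx dotmxBl mulrBr scalerBl.
by rewrite (addrC z) addrAC addrK addrC.
Qed.

Lemma eucl_norm_reflection_motion_sub_le {D : nat} (x0 n z : 'rV[R]_D)
    (i : 'I_D) (s : R) :
  n 0 i != 0 -> 0 <= s -> `|dotmx (z - x0) n| <= s * `|n 0 i| ->
  eucl_norm (reflection_motion x0 n z - z) <= 2 * s.
Proof.
move=> ni0 s_ge0 hz; set r := eucl_norm n.
have r_gt0 : 0 < r by apply: lt_le_trans (abs_coord_le_eucl_norm n i); rewrite normr_gt0.
have nn : dotmx n n = r ^+ 2.
  by rewrite /r eucl_norm_dotmx sqr_sqrtr // ltW // (dotmx_self_gt0 ni0).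
have hd : `|dotmx (z - x0) n| <= s * r.
  exact: le_trans hz (ler_wpM2l s_ge0 (abs_coord_le_eucl_norm n i)).
rewrite reflection_motion_sub eucl_normZ -/r normrM dotmxBl distrC -dotmxBl nn.
rewrite ger0_norm ?divr_ge0 ?sqr_ge0 //.
have -> : 2 / r ^+ 2 * `|dotmx (z - x0) n| * r = 2 * (`|dotmx (z - x0) n| / r).
  by field; rewrite gt_eqF.
by rewrite ler_wpM2l // ler_pdivrMr.
Qed.

Lemma fact_lt_expn (n : nat) : (0 < n)%N -> (n`! < (2 * n`!) ^ n)%N.
Proof.
move=> n_gt0; have pos : (0 < 2 * n`!)%N by rewrite muln_gt0 fact_gt0.
by apply: leq_trans (leq_pexp2l pos n_gt0); rewrite expn1 ltn_Pmull ?fact_gt0.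
Qed.

Section MixedFrames.

Context {D : nat} {E : seq 'rV[R]_D} (x0 : 'rV[R]_D) (s : R).

Local Notation frame := {ffun 'I_D -> option 'I_(size E)}.

Definition frame_mx (c : frame) : 'M[R]_D :=
  \matrix_i (if c i is Some p then nth 0 E p - x0 else delta_mx 0 i).

Definition basis_rows (c : frame) : nat := #|[pred i | c i == None]|.

Definition frame_weight (c : frame) : R :=
  `|\det (frame_mx c)| * s ^+ basis_rows c.

Definition set_frame (c : frame) (i : 'I_D) (q : 'I_(size E)) : frame :=
  [ffun k => if k == i then Some q else c k].

Lemma frame_weight_basis : frame_weight [ffun=> None] = s ^+ D.
Proof.
rewrite /frame_weight; have -> : frame_mx [ffun=> None] = 1%:M.
  by apply/matrixP => i j; rewrite !mxE ffunE mxE eqxx eq_sym.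
rewrite det1 normr1 mul1r /basis_rows.
by rewrite (eq_card (B := predT)) ?cardT ?size_enum_ord // => i; rewrite !inE ffunE.
Qed.

Lemma basis_rows_set_frame (c : frame) (i : 'I_D) (q : 'I_(size E)) :
  c i = None -> basis_rows c = (basis_rows (set_frame c i q)).+1.
Proof.
move=> ci; rewrite /basis_rows (cardD1 i) inE ci eqxx add1n; congr _.+1.
by apply: eq_card => k; rewrite !inE ffunE; case: eqP.
Qed.

Lemma det_frame_mx_le_VD (c : frame) : x0 \in E -> (forall i, c i != None) ->
  `|\det (frame_mx c)| <= D`!%:R * VD E.
Proof.
move=> x0E c_some; pose p0 := Ordinal (etrans (index_mem x0 E) x0E).
pose f : {ffun 'I_D.+1 -> 'I_(size E)} :=
  [ffun k => if unlift ord0 k is Some i then odflt p0 (c i) else p0].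
have -> : frame_mx c = \matrix_(i, j) (nth 0 E (f (lift ord0 i)) 0 j
                                       - nth 0 E (f ord0) 0 j).
  apply/matrixP => i j; rewrite !mxE !ffunE liftK unlift_none /= nth_index //.
  by case: (c i) (c_some i) => [p|] //= _; rewrite !mxE.
rewrite mulrC -ler_pdivrMr ?ltr0n ?fact_gt0 // /VD.
exact: (le_bigmax 0 (fun f : {ffun 'I_D.+1 -> 'I_(size E)} =>
                       simplex_vol (fun i => nth 0 E (f i))) f).
Qed.

End MixedFrames.

Section MaximalFrame.

Context {D : nat} {E : seq 'rV[R]_D} {x0 : 'rV[R]_D} {s : R}.
Context {c : {ffun 'I_D -> option 'I_(size E)}}.

Hypothesis c_max : forall c' : {ffun 'I_D -> option 'I_(size E)},
  frame_weight x0 s c' <= frame_weight x0 s c.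
Hypothesis s_gt0 : 0 < s.

Lemma frame_max_det_neq0 : \det (frame_mx x0 c) != 0.
Proof.
apply: contraTneq (c_max [ffun=> None]) => det0.
by rewrite frame_weight_basis /frame_weight det0 normr0 mul0r -ltNge exprn_gt0.
Qed.

Lemma frame_max_has_basis_row : x0 \in E -> D`!%:R * VD E < s ^+ D ->
  exists i, c i = None.
Proof.
move=> x0E VE; case: (pickP [pred i | c i == None]) => [i /eqP|no_basis].
  by exists i.
have c_some i : c i != None by have /= -> := no_basis i.
have basis0 : basis_rows c = 0%N by apply: eq_card0.
have := c_max [ffun=> None].
rewrite frame_weight_basis /frame_weight basis0 expr0 mulr1 => s_le_det.
have := lt_le_trans VE (le_trans s_le_det (det_frame_mx_le_VD x0 c x0E c_some)).
by rewrite ltxx.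
Qed.

Variable i0 : 'I_D.
Hypothesis c_i0 : c i0 = None.

Let n := \row_j cofactor (frame_mx x0 c) i0 j.

Lemma frame_max_cofactor : n 0 i0 = \det (frame_mx x0 c).
Proof.
rewrite (expand_det_row _ i0) (bigD1 i0) //= big1 ?addr0.
  by rewrite !mxE c_i0 !mxE !eqxx mul1r.
by move=> j ji0; rewrite !mxE c_i0 mxE (negbTE ji0) andbF mul0r.
Qed.

Lemma frame_max_dotmx_le (z : 'rV[R]_D) : z \in E ->
  `|dotmx (z - x0) n| <= s * `|n 0 i0|.
Proof.
move=> zE; pose q := Ordinal (etrans (index_mem z E) zE).
have det_set : \det (frame_mx x0 (set_frame c i0 q)) = dotmx (z - x0) n.
  rewrite -det_set_row; congr (\det _); apply/matrixP => k l.
  by rewrite !mxE ffunE; case: ifP => _; rewrite ?nth_index // !mxE.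
have := c_max (set_frame c i0 q).
rewrite /frame_weight det_set (basis_rows_set_frame c i0 q c_i0) exprS.
rewrite mulrA ler_pM2r ?exprn_gt0 // frame_max_cofactor.
by rewrite mulrC.
Qed.

End MaximalFrame.

Theorem lemma3p6 (D : nat) (hD : (2 <= D)%N) :
  exists C : Rdefinitions.R, 0 < C /\
    forall (eta : Rdefinitions.R) (E : seq 'rV[Rdefinitions.R]_D),
      0 < eta -> eta < 1 ->
      diam E = 1 -> VD E <= eta ^+ D ->
      exists rho : 'rV[Rdefinitions.R]_D -> 'rV[Rdefinitions.R]_D,
        improper_motion rho /\
        forall z, z \in E -> eucl_norm (rho z - z) <= C * eta.
Proof.
have factD_gt0 : 0 < D`!%:R :> R by rewrite ltr0n fact_gt0.
exists (4 * D`!%:R); split=> [|eta E eta_gt0 _ diamE VE]; first by rewrite mulr_gt0.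
have x0E : nth 0 E 0 \in E.
  case: E diamE {VE} => [|x E]; last by rewrite mem_head.
  by rewrite /diam big_nil => /esym/eqP; rewrite oner_eq0.
set x0 := nth 0 E 0; set s := 2 * D`!%:R * eta.
have s_gt0 : 0 < s by rewrite !mulr_gt0.
have VE_lt : D`!%:R * VD E < s ^+ D.
  rewrite /s exprMn -natrM -natrX; apply: le_lt_trans (ler_wpM2l (ltW factD_gt0) VE) _.
  by rewrite ltr_pM2r ?exprn_gt0 // ltr_nat fact_lt_expn // ltnW.
have [c _ c_max] := arg_maxP (frame_weight (E := E) x0 s) (isT : predT [ffun=> None]).
have {}c_max c' := c_max c' isT.
have [i0 c_i0] := frame_max_has_basis_row c_max x0E VE_lt.
set n := \row_j cofactor (frame_mx x0 c) i0 j.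
have ni0 : n 0 i0 != 0 by rewrite frame_max_cofactor // (frame_max_det_neq0 c_max s_gt0).
exists (reflection_motion x0 n); split.
  by apply: reflection_motion_improper; rewrite gt_eqF ?(dotmx_self_gt0 ni0).
move=> z zE; rewrite (_ : 4 * _ * eta = 2 * s); last by rewrite /s; ring.
apply: eucl_norm_reflection_motion_sub_le ni0 (ltW s_gt0) _.
exact: frame_max_dotmx_le.
Qed.
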